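(* Let $f=f(n)\ge0$ with $f\to\infty$. There exists a constant $C>0$ such that, for all sufficiently large $n$ and every $f/n\le p\le1$, with probability at least $1-e^{-C(pn)^{1/3}}$ the number of vertices of $\mathcal G(n,p)$ whose degree lies outside $[\bar d-(pn)^{2/3},\bar d+(pn)^{2/3}]$ is at most $n/e^{Cf^{1/3}}$.
   Context: $\mathcal G(n,p)$ is the Erdős–Rényi random graph on $[n]$, each edge present independently with probability $p$. $\bar d=2m/(n-1)$, where $m$ is the number of edges of $\mathcal G(n,p)$. The constant $C$ does not depend on $p$. *)

From HB Require Import structures.
From mathcomp Require Import all_boot all_order all_algebra.
From mathcomp Require Import all_classical all_reals all_analysis.
Set Implicit Arguments. Unset Strict Implicit. Unset Printing Implicit Defensive.
Import Order.TTheory GRing.Theory Num.Theory.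
Local Open Scope ring_scope.

(* Potential edges of a simple graph on [n] = 'I_n : unordered pairs encoded as (i,j), i<j. *)
Definition epairs (n : nat) : {set 'I_n * 'I_n} := [set e : 'I_n * 'I_n | (val e.1 < val e.2)%N].

Definition is_graph (n : nat) (g : {set 'I_n * 'I_n}) : bool := g \subset epairs n.

Definition deg (n : nat) (g : {set 'I_n * 'I_n}) (v : 'I_n) : nat :=
  #|[set u : 'I_n | ((v, u) \in g) || ((u, v) \in g)]|.

Definition gnp_weight (R : realType) (n : nat) (p : R) (g : {set 'I_n * 'I_n}) : R :=
  p ^+ #|g| * (1 - p) ^+ (#|epairs n| - #|g|).

Definition gnp_prob (R : realType) (n : nat) (p : R) (A : {set 'I_n * 'I_n} -> bool) : R :=
  \sum_(g : {set 'I_n * 'I_n} | is_graph g && A g) gnp_weight p g.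

Definition dbar (R : realType) (n : nat) (g : {set 'I_n * 'I_n}) : R :=
  (2 * #|g|)%:R / (n.-1)%:R.

Definition n_outside (R : realType) (n : nat) (g : {set 'I_n * 'I_n}) (t : R) : nat :=
  #|[set v : 'I_n | ((deg g v)%:R < dbar R g - t) || (dbar R g + t < (deg g v)%:R)]|.

(* Write x = (pn)^(1/3), so that the window half-width is t = x^2.  By the
   Chernoff bound with parameter 1/(16x), the edge count deviates from its mean
   by t(n-1)/8 (which would shift the average degree by t/4), and the degree of
   a fixed vertex deviates from p(n-1) by t/2, each with probability at most
   2 exp(-x/256).  Outside the first event every outlier has such a deviant
   degree, so Markov's inequality applied to the number of deviant vertices
   bounds the probability of more than c outliers by 2n exp(-x/256)/c.  With
   c = n exp(-f^(1/3)/1024) and f <= pn, the total failure probability is at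
   most exp(-x/1024) as soon as x >= 1024. *)

From HB Require Import structures.
From mathcomp Require Import all_boot all_order all_algebra.
From mathcomp Require Import all_classical all_reals all_analysis.
From mathcomp Require Import ring lra zify.
Import Order.TTheory GRing.Theory Num.Theory.
Local Open Scope ring_scope.

Lemma expR_sub1_le {R : realType} (l : R) :
  0 <= l -> l <= 1 / 2 -> expR l - 1 <= l + 2 * l ^+ 2.
Proof.
move=> l_ge0 l_le; have := expR_ge1Dx (- l); have := expR_ge0 l.
have : expR l * expR (- l) = 1 by rewrite -expRD subrr expR0.
nra.
Qed.

Lemma expRN_sub1_le {R : realType} (l : R) :
  0 <= l -> expR (- l) - 1 <= - l + l ^+ 2.
Proof.
move=> l_ge0; have := expR_ge1Dx l; have := expR_ge0 (- l).
have : expR (- l) * expR l = 1 by rewrite -expRD addNr expR0.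
nra.
Qed.

Lemma far_from_center {R : realFieldType} (d D q d0 t : R) :
  4 <= t -> `|D - q| < t / 4 -> `|q - d0| <= 1 ->
  (d < D - t) || (D + t < d) -> t / 2 <= `|d - d0|.
Proof.
move=> t_ge4; rewrite ltr_norml ler_norml ler_normr.
by move=> /andP[? ?] /andP[? ?] /orP[? | ?]; apply/orP; [right | left]; lra.
Qed.

Lemma indicator_markov {R : realFieldType} (b : bool) (N S c : R) :
  0 < c -> 0 <= S -> (~~ b -> N <= S) -> 1 - b%:R - S / c <= (N <= c)%R%:R.
Proof.
move=> c_gt0 S_ge0; case: b => [_|/(_ isT) NS] /=.
  by rewrite subrr sub0r (le_trans _ (ler0n _ _)) // oppr_le0 divr_ge0 // ltW.
have [//|cN] := lerP N c; first by rewrite subr0 lerBlDr lerDl divr_ge0 // ltW.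
suff : 1 <= S / c by rewrite subr0 /=; lra.
by rewrite ler_pdivlMr // mul1r (le_trans (ltW cN)).
Qed.

Section BernoulliProduct.
Context {R : realType} {T : finType} (E : {set T}) (p : R).
Hypotheses (p_ge0 : 0 <= p) (p_le1 : p <= 1).

Definition bern_weight (J : {set T}) : R :=
  \prod_i (if i \in J then (if i \in E then p else 0)
           else (if i \in E then 1 - p else 1)).

Definition bern_expect (X : {set T} -> R) : R := \sum_J bern_weight J * X J.

Lemma bern_weight_ge0 (J : {set T}) : 0 <= bern_weight J.
Proof.
apply: prodr_ge0 => i _.
by case: (i \in J); case: (i \in E); rewrite //= subr_ge0.
Qed.

Lemma bern_weight_eq0 (J : {set T}) : ~~ (J \subset E) -> bern_weight J = 0.
Proof.
case/fintype.subsetPn=> i iJ iE.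
by rewrite /bern_weight (bigD1 i) //= iJ (negbTE iE) mul0r.
Qed.

Lemma bern_weightE (J : {set T}) :
  J \subset E -> bern_weight J = p ^+ #|J| * (1 - p) ^+ (#|E| - #|J|).
Proof.
move=> JsubE; have JE := fintype.subsetP JsubE.
rewrite /bern_weight (bigID (mem J)) /=.
congr (_ * _).
  by rewrite -prodr_const; apply: eq_bigr => i iJ; rewrite iJ JE.
rewrite (bigID (mem E)) /= [X in _ * X]big1 ?mulr1; last first.
  by move=> i /andP[/negbTE -> /negbTE ->].
rewrite (eq_bigr (fun=> 1 - p)); last by move=> i /andP[/negbTE -> ->].
rewrite prodr_const -(cardsID J E) (finset.setIidPr JsubE) addKn.
by congr (_ ^+ _); apply: eq_card => i; rewrite [RHS]inE.
Qed.

Lemma bern_expect_prod (h : T -> R) :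
  bern_expect (fun J => \prod_(i in J) h i) =
  \prod_i (if i \in E then 1 - p + p * h i else 1).
Proof.
rewrite [RHS](eq_bigr (fun i => (if i \in E then p else 0) * h i
                    + (if i \in E then 1 - p else 1))); last first.
  by move=> i _; case: (i \in E); rewrite ?mul0r ?add0r // addrC.
rewrite (@bigA_distr R 0 1 *%R +%R).
apply: eq_bigr => J _; rewrite /bern_weight (big_mkcond (mem J)) -big_split /=.
by apply: eq_bigr => i _; case: (i \in J); rewrite ?mulr1.
Qed.

Lemma bern_expect_cst (c : R) : bern_expect (fun=> c) = c.
Proof.
have := bern_expect_prod (fun=> 1); rewrite /bern_expect -mulr_suml.
under [in X in X = _ -> _]eq_bigr do rewrite big1 // mulr1.
move=> ->; rewrite big1 ?mul1r // => i _; case: (i \in E) => //.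
by rewrite mulr1 subrK.
Qed.

Lemma bern_expectD (X Y : {set T} -> R) :
  bern_expect (fun J => X J + Y J) = bern_expect X + bern_expect Y.
Proof. by rewrite -big_split; apply: eq_bigr => J _; rewrite mulrDr. Qed.

Lemma bern_expectZ (c : R) (X : {set T} -> R) :
  bern_expect (fun J => c * X J) = c * bern_expect X.
Proof. by rewrite mulr_sumr; apply: eq_bigr => J _; rewrite mulrCA. Qed.

Lemma bern_expect_sum (I : finType) (X : I -> {set T} -> R) :
  bern_expect (fun J => \sum_i X i J) = \sum_i bern_expect (X i).
Proof.
rewrite exchange_big; apply: eq_bigr => J _; exact: mulr_sumr.
Qed.

Lemma bern_expectB (X Y : {set T} -> R) :
  bern_expect (fun J => X J - Y J) = bern_expect X - bern_expect Y.
Proof. by rewrite -sumrB; apply: eq_bigr => J _; rewrite mulrBr. Qed.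

Lemma ler_bern_expect (X Y : {set T} -> R) :
  (forall J : {set T}, J \subset E -> X J <= Y J) -> bern_expect X <= bern_expect Y.
Proof.
move=> XY; apply: ler_sum => J _.
have [JE|JE] := boolP (J \subset E); last by rewrite bern_weight_eq0 ?mul0r.
by rewrite ler_wpM2l ?bern_weight_ge0 ?XY.
Qed.

Lemma bern_expect_expR_card (K : {set T}) (s : R) :
  bern_expect (fun J => expR (s * #|J :&: K|%:R))
  <= expR (p * #|E :&: K|%:R * (expR s - 1)).
Proof.
have -> : (fun J => expR (s * #|J :&: K|%:R)) =
    (fun J => \prod_(i in J) (if i \in K then expR s else 1)).
  apply/funext => J; rewrite mulrC expRM_natl -big_mkcondr -prodr_const /=.
  by apply: eq_bigl => i; rewrite inE.
rewrite bern_expect_prod (eq_bigr (fun i => if i \in E :&: K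
    then 1 + p * (expR s - 1) else 1)); last first.
  by move=> i _; rewrite inE; case: (i \in E); case: (i \in K) => //=; ring.
rewrite -big_mkcond prodr_const /= mulrAC [_ * #|_|%:R]mulrC expRM_natl.
apply: lerXn2r; rewrite ?nnegrE ?expR_ge0 ?expR_ge1Dx //.
rewrite mulrBr mulr1; have := mulr_ge0 p_ge0 (expR_ge0 s); have := p_le1; lra.
Qed.

Lemma chernoff (K : {set T}) (s b : R) :
  bern_expect (fun J => (b <= s * #|J :&: K|%:R)%R%:R)
  <= expR (- b + p * #|E :&: K|%:R * (expR s - 1)).
Proof.
rewrite expRD.
apply: le_trans (ler_wpM2l (expR_ge0 (- b)) (bern_expect_expR_card K s)).
rewrite -bern_expectZ; apply: ler_bern_expect => J _; rewrite -expRD.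
have [bs|_] := boolP (b <= _); last exact: expR_ge0.
by apply: le_trans (expR_ge1Dx _); rewrite lerDl addrC subr_ge0.
Qed.

Lemma chernoff_upper_tail (K : {set T}) (a l : R) : 0 <= l -> l <= 1 / 2 ->
  bern_expect (fun J => (p * #|E :&: K|%:R + a <= #|J :&: K|%:R)%R%:R)
  <= expR (- (l * a) + 2 * (p * #|E :&: K|%:R) * l ^+ 2).
Proof.
move=> l_ge0 l_le; set mu := p * _.
have mu_ge0 : 0 <= mu by rewrite mulr_ge0.
apply: le_trans (le_trans _ (chernoff K l (l * (mu + a)))) _.
  apply: ler_bern_expect => J _.
  by have [/(ler_wpM2l l_ge0)->|] := boolP (mu + a <= _).
rewrite ler_expR -/mu; have := ler_wpM2l mu_ge0 (expR_sub1_le l l_ge0 l_le); nra.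
Qed.

Lemma chernoff_lower_tail (K : {set T}) (a l : R) : 0 <= l ->
  bern_expect (fun J => (#|J :&: K|%:R <= p * #|E :&: K|%:R - a)%R%:R)
  <= expR (- (l * a) + p * #|E :&: K|%:R * l ^+ 2).
Proof.
move=> l_ge0; set mu := p * _.
have mu_ge0 : 0 <= mu by rewrite mulr_ge0.
apply: le_trans (le_trans _ (chernoff K (- l) (l * (a - mu)))) _.
  apply: ler_bern_expect => J _.
  have [Xle|//] := boolP (_ <= mu - a).
  by have -> : l * (a - mu) <= - l * #|J :&: K|%:R by nra.
rewrite ler_expR -/mu; have := ler_wpM2l mu_ge0 (expRN_sub1_le l l_ge0); nra.
Qed.

Lemma chernoff_deviation (K : {set T}) (a l : R) : 0 <= l -> l <= 1 / 2 ->
  bern_expect (fun J => (a <= `|#|J :&: K|%:R - p * #|E :&: K|%:R|)%R%:R)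
  <= 2 * expR (- (l * a) + 2 * (p * #|E :&: K|%:R) * l ^+ 2).
Proof.
move=> l_ge0 l_le; set mu := p * _.
have mu_ge0 : 0 <= mu by rewrite mulr_ge0.
apply: (@le_trans _ _ (bern_expect (fun J => (mu + a <= #|J :&: K|%:R)%R%:R
    + (#|J :&: K|%:R <= mu - a)%R%:R))).
  apply: ler_bern_expect => J _; set X := #|J :&: K|%:R.
  have [|_] := boolP (a <= _); last by rewrite addr_ge0 ?ler0n.
  rewrite ler_normr opprB => /orP[dev|dev].
    have -> : mu + a <= X by lra.
    by rewrite lerDl ler0n.
  have -> : X <= mu - a by lra.
  by rewrite lerDr ler0n.
rewrite bern_expectD mulr_natl mulr2n lerD ?chernoff_upper_tail //.
apply: le_trans (chernoff_lower_tail K a l l_ge0) _.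
by rewrite ler_expR -/mu; have := mulr_ge0 mu_ge0 (sqr_ge0 l); nra.
Qed.

End BernoulliProduct.

Section RandomGraph.
Context {R : realType} {n : nat}.
Local Notation E := (epairs n).

Lemma gnp_probE (p : R) (A : {set 'I_n * 'I_n} -> bool) :
  gnp_prob p A = bern_expect E p (fun g => (A g)%:R).
Proof.
rewrite /gnp_prob /bern_expect [RHS](bigID (fun g => is_graph g && A g)) /=.
rewrite [X in _ = _ + X]big1 ?addr0; last first.
  move=> g; have [_ /= /negbTE->|/bern_weight_eq0->] := boolP (is_graph g).
    by rewrite mulr0.
  by rewrite mul0r.
apply: eq_bigr => g /andP[gE ->].
by rewrite mulr1 bern_weightE.
Qed.

Lemma card_epairs : (2 * #|E|)%N = (n * n.-1)%N.
Proof.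
pose sw := fun e : 'I_n * 'I_n => (e.2, e.1).
have swK : cancel sw sw by case.
pose D := [set e : 'I_n * 'I_n | e.1 == e.2].
have cardD : #|D| = n.
  have -> : D = [set (i, i) | i in [set: 'I_n]].
    apply/setP => -[a b]; rewrite inE /=; apply/eqP/imsetP => [->|[i _ [-> ->]]//].
    by exists b; rewrite ?finset.in_setT.
  by rewrite card_imset ?cardsT ?card_ord // => i j [].
have diagC : (~: E) :&: D = D.
  apply/setP => -[a b]; rewrite !inE /=; apply/andP/eqP => [[_ /eqP //]|->].
  by rewrite ltnn.
have offdiagC : (~: E) :\: D = sw @: E.
  rewrite (can2_imset_pre _ swK swK); apply/setP => -[a b]; rewrite !inE /=.
  by rewrite -val_eqE; case: ltngtP.
have := cardsC E; rewrite card_prod card_ord -(cardsID D (~: E)) diagC offdiagC.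
rewrite card_imset; last exact: can_inj swK.
rewrite cardD -subn1 mulnBr muln1; move: #|E| => e; lia.
Qed.

Definition upair (v u : 'I_n) : 'I_n * 'I_n :=
  if (val v < val u)%N then (v, u) else (u, v).

Definition incident (v : 'I_n) : {set 'I_n * 'I_n} := upair v @: [set: 'I_n].

Lemma upair_inj v : injective (upair v).
Proof.
move=> a b; rewrite /upair.
by case: ltnP => h1; case: ltnP => h2 [] => *; congruence.
Qed.

Lemma upair_epairs v u : (upair v u \in E) = (u != v).
Proof.
rewrite /upair; case: (ltngtP (val v) (val u)) => h; rewrite inE /=.
- by rewrite h; apply/esym/negP => /eqP e; move: h; rewrite e ltnn.
- by rewrite h; apply/esym/negP => /eqP e; move: h; rewrite e ltnn.
- by rewrite h ltnn (val_inj h) eqxx.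
Qed.

Lemma card_epairs_incident v : #|E :&: incident v| = n.-1.
Proof.
have -> : E :&: incident v = upair v @: [set~ v].
  apply/setP => x; rewrite finset.in_setI; apply/andP/imsetP.
    by move=> [xE /imsetP[u _ xu]]; exists u; rewrite // in_setC1 -upair_epairs -xu.
  move=> [u]; rewrite in_setC1 => uv ->; rewrite upair_epairs uv; split=> //.
  by apply/imsetP; exists u; rewrite ?finset.in_setT.
by rewrite card_imset ?cardsC1 ?card_ord //; exact: upair_inj.
Qed.

Lemma deg_incident (g : {set 'I_n * 'I_n}) v :
  is_graph g -> deg g v = #|g :&: incident v|.
Proof.
move=> /fintype.subsetP gE.
have -> : g :&: incident v = upair v @: [set u | upair v u \in g].
  apply/setP => x; rewrite !inE; apply/andP/imsetP.
    by move=> [xg /imsetP[u _ xu]]; exists u; rewrite // inE -xu.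
  move=> [u]; rewrite inE => ug ->; split=> //.
  by apply/imsetP; exists u; rewrite ?finset.in_setT.
rewrite card_imset; last exact: upair_inj.
rewrite /deg; apply: eq_card => u; rewrite !inE /upair.
case: ltnP => h; apply/orP/idP => [[] // H|]; try by [left|right].
- by have := gE _ H; rewrite inE /= ltnNge ltnW.
- by have := gE _ H; rewrite inE /= ltnNge h.
Qed.

Lemma dbar_sub_mean (p : R) (g : {set 'I_n * 'I_n}) : (1 < n)%N ->
  dbar R g - p * n%:R = 2 * (#|g|%:R - p * #|E|%:R) / n.-1%:R.
Proof.
move=> n_gt1; have k_neq0 : n.-1%:R != 0 :> R by rewrite pnatr_eq0; lia.
have -> : p * #|E|%:R = p * (n%:R * n.-1%:R) / 2.
  by rewrite -natrM -card_epairs natrM; field.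
by rewrite /dbar natrM; field.
Qed.

Lemma n_outside_le (g : {set 'I_n * 'I_n}) (t q d0 : R) :
  4 <= t -> `|dbar R g - q| < t / 4 -> `|q - d0| <= 1 ->
  (n_outside g t <= #|[set v | t / 2 <= `|(deg g v)%:R - d0|]%R|)%N.
Proof.
move=> t_ge4 Dq qd0; apply: subset_leq_card; apply/fintype.subsetP => v.
by rewrite !inE; apply: (far_from_center _ _ q).
Qed.

Lemma n_outside_le_deviant (p t : R) (g : {set 'I_n * 'I_n}) :
  is_graph g -> 0 <= p -> p <= 1 -> 4 <= t -> (1 < n)%N ->
  `|#|g :&: E|%:R - p * #|E :&: E|%:R| < t * n.-1%:R / 8 ->
  (n_outside g t)%:R <= \sum_v
    (t / 2 <= `|#|g :&: incident v|%:R - p * #|E :&: incident v|%:R|)%R%:R :> R.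
Proof.
move=> gE p_ge0 p_le1 t_ge4 n_gt1; rewrite finset.setIid (finset.setIidPl gE).
have k_gt0 : 0 < n.-1%:R :> R by rewrite ltr0n; lia.
move=> edges_near.
have dbar_near : `|dbar R g - p * n%:R| < t / 4.
  rewrite dbar_sub_mean // !normrM normr_nat [`|_^-1|]ger0_norm ?invr_ge0 ?ler0n //.
  by rewrite ltr_pdivrMr //; lra.
have mean_near : `|p * n%:R - p * n.-1%:R| <= 1.
  have -> : n%:R = n.-1%:R + 1 :> R by rewrite natr1 prednK // ltnW.
  by rewrite mulrDr mulr1 addrAC subrr add0r ger0_norm.
have := n_outside_le _ _ _ _ t_ge4 dbar_near mean_near; rewrite -(ler_nat R).
move/le_trans; apply.
rewrite -sum1_card natr_sum big_mkcond /=; apply: ler_sum => v _.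
rewrite inE card_epairs_incident -deg_incident //.
by case: ifP.
Qed.

Lemma edge_count_deviation (p x : R) :
  0 <= p -> p <= 1 -> 1 <= x -> p * n%:R = x ^+ 3 -> (1 < n)%N ->
  bern_expect E p (fun g =>
    (x ^+ 2 * n.-1%:R / 8 <= `|#|g :&: E|%:R - p * #|E :&: E|%:R|)%R%:R)
  <= 2 * expR (- (x / 256)).
Proof.
move=> p_ge0 p_le1 x_ge1 pn n_gt1; set l := (16 * x)^-1; set k : R := n.-1%:R.
have lx : l * x = 1 / 16 by rewrite /l; field; lra.
have l_ge0 : 0 <= l by rewrite invr_ge0; lra.
have l_le : l <= 1 / 2 by nra.
apply: le_trans (chernoff_deviation E p p_ge0 p_le1 _ _ l l_ge0 l_le) _.
rewrite ler_pM2l // ler_expR finset.setIid.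
have -> : #|E|%:R = n%:R * k / 2 :> R by rewrite -natrM -card_epairs natrM; field.
have -> : p * (n%:R * k / 2) = p * n%:R * k / 2 by ring.
rewrite pn.
have -> : 2 * (x ^+ 3 * k / 2) * l ^+ 2 = (l * x) ^+ 2 * x * k by field.
have -> : l * (x ^+ 2 * k / 8) = l * x * x * k / 8 by ring.
have : 1 <= k by rewrite /k ler1n; lia.
rewrite lx; nra.
Qed.

Lemma degree_deviation (p x : R) (v : 'I_n) :
  0 <= p -> p <= 1 -> 1 <= x -> p * n%:R = x ^+ 3 ->
  bern_expect E p (fun g =>
    (x ^+ 2 / 2 <= `|#|g :&: incident v|%:R - p * #|E :&: incident v|%:R|)%R%:R)
  <= 2 * expR (- (x / 256)).
Proof.
move=> p_ge0 p_le1 x_ge1 pn; set l := (16 * x)^-1.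
have lx : l * x = 1 / 16 by rewrite /l; field; lra.
have l_ge0 : 0 <= l by rewrite invr_ge0; lra.
have l_le : l <= 1 / 2 by nra.
apply: le_trans (chernoff_deviation E p p_ge0 p_le1 _ _ l l_ge0 l_le) _.
rewrite ler_pM2l // ler_expR card_epairs_incident.
have mean_le : p * n.-1%:R <= x ^+ 3.
  by rewrite -pn ler_wpM2l // ler_nat leq_pred.
have mean_term : 2 * (p * n.-1%:R) * l ^+ 2 <= x / 128.
  apply: (@le_trans _ _ (2 * x ^+ 3 * l ^+ 2)).
    by rewrite ler_wpM2r ?sqr_ge0 // ler_pM2l.
  have -> : 2 * x ^+ 3 * l ^+ 2 = 2 * (l * x) ^+ 2 * x by ring.
  by rewrite lx expr2; lra.
have -> : l * (x ^+ 2 / 2) = l * x * x / 2 by ring.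
by rewrite lx; lra.
Qed.

Lemma gnp_n_outside_le (p x c : R) :
  0 <= p -> p <= 1 -> 2 <= x -> p * n%:R = x ^+ 3 -> (1 < n)%N -> 0 < c ->
  1 - 2 * (1 + n%:R / c) * expR (- (x / 256))
  <= gnp_prob p (fun g : {set 'I_n * 'I_n} => (n_outside g (x ^+ 2))%:R <= c).
Proof.
move=> p_ge0 p_le1 x_ge2 pn n_gt1 c_gt0; have x_ge1 : 1 <= x by lra.
set eps := expR (- (x / 256)).
set edge_dev := fun g : {set 'I_n * 'I_n} =>
  (x ^+ 2 * n.-1%:R / 8 <= `|#|g :&: E|%:R - p * #|E :&: E|%:R|)%R.
set deg_dev := fun v (g : {set 'I_n * 'I_n}) =>
  (x ^+ 2 / 2 <= `|#|g :&: incident v|%:R - p * #|E :&: incident v|%:R|)%R.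
rewrite gnp_probE.
have markov : bern_expect E p (fun g =>
    1 - (edge_dev g)%:R - c^-1 * \sum_v (deg_dev v g)%:R)
  <= bern_expect E p (fun g => ((n_outside g (x ^+ 2))%:R <= c)%R%:R).
  apply: (ler_bern_expect _ _ p_ge0 p_le1) => g gE.
  rewrite mulrC; apply: indicator_markov => //; first by rewrite sumr_ge0.
  rewrite -ltNge => edges_near; apply: n_outside_le_deviant => //.
  by rewrite expr2; nra.
apply: le_trans markov.
rewrite !bern_expectB bern_expect_cst bern_expectZ bern_expect_sum.
have edges : bern_expect E p (fun g => (edge_dev g)%:R) <= 2 * eps.
  exact: edge_count_deviation.
have degs : \sum_v bern_expect E p (fun g => (deg_dev v g)%:R) <= n%:R * (2 * eps).
  have deg_v v := degree_deviation p x v p_ge0 p_le1 x_ge1 pn.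
  apply: le_trans (ler_sum _ (fun v _ => deg_v v)) _.
  by rewrite sumr_const card_ord [n%:R * _]mulr_natl.
have c_inv_ge0 : 0 <= c^-1 by rewrite invr_ge0 ltW.
have := ler_wpM2l c_inv_ge0 degs.
have -> : 2 * (1 + n%:R / c) * eps = 2 * eps + c^-1 * (n%:R * (2 * eps)) by ring.
lra.
Qed.

End RandomGraph.

Lemma powRV3K {R : realType} (a : R) : 0 <= a -> (a `^ (3%:R)^-1) ^+ 3 = a.
Proof.
by move=> a_ge0; rewrite -powR_mulrn ?powR_ge0 // -powRrM mulVf ?pnatr_eq0 // powRr1.
Qed.

Lemma two_tails_le {R : realType} (x y : R) : 1024 <= x -> y <= x ->
  2 * (1 + expR (1 / 1024 * y)) * expR (- (x / 256)) <= expR (- (1 / 1024 * x)).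
Proof.
move=> x_ge y_le; set a := expR (- (3 * x / 1024)).
have a_ge0 : 0 <= a := expR_ge0 _.
have eps_le : expR (- (x / 256)) <= a by rewrite ler_expR; lra.
have y_term : expR (1 / 1024 * y) * expR (- (x / 256)) <= a.
  by rewrite -expRD ler_expR; lra.
have four_le : 4 <= expR (2 * x / 1024).
  have e_ge2 : 2 <= expR (1 : R) by have := expR_ge1Dx (1 : R); lra.
  apply: (@le_trans _ _ (expR 1 * expR 1)); first by nra.
  by rewrite -expRD ler_expR; lra.
have -> : expR (- (1 / 1024 * x)) = expR (2 * x / 1024) * a.
  by rewrite -expRD; congr expR; field.
have := ler_wpM2r a_ge0 four_le; lra.
Qed.

Theorem lemma4p3 (R : realType) (f : nat -> R) :
  (forall n, 0 <= f n) ->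
  (forall M : R, exists N0 : nat, forall n : nat, (N0 <= n)%N -> M <= f n) ->
  exists C : R, 0 < C /\
    exists N : nat, forall n : nat, (N <= n)%N ->
      forall p : R, f n / n%:R <= p -> p <= 1 ->
        1 - expR (- (C * ((p * n%:R) `^ (3%:R)^-1)))
        <= gnp_prob p (fun g : {set 'I_n * 'I_n} =>
             (n_outside g ((p * n%:R) `^ (2%:R / 3%:R)))%:R
               <= n%:R / expR (C * (f n `^ (3%:R)^-1))).
Proof.
move=> f_ge0 f_unbounded; exists (1 / 1024); split; first lra.
have [N0 f_large] := f_unbounded (1024 ^+ 3).
exists (maxn N0 2) => n; rewrite geq_max => /andP[/f_large f_ge n_ge2] p fn_le p_le1.
have n_gt0 : 0 < n%:R :> R by rewrite ltr0n; lia.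
have f_le : f n <= p * n%:R by rewrite -ler_pdivrMr.
have p_ge0 : 0 <= p by apply: le_trans fn_le; rewrite divr_ge0 // ltW.
have pn_ge0 : 0 <= p * n%:R by rewrite mulr_ge0 // ltW.
set x := (p * n%:R) `^ (3%:R)^-1; set y := f n `^ (3%:R)^-1.
have x_ge0 : 0 <= x by rewrite powR_ge0.
have pn : p * n%:R = x ^+ 3 by rewrite powRV3K.
have cube_le z : 0 <= z -> z ^+ 3 <= x ^+ 3 -> z <= x.
  by move=> z_ge0; rewrite ler_pXn2r ?nnegrE.
have x_ge : 1024 <= x by apply: cube_le; rewrite ?ler0n // -pn (le_trans f_ge).
have y_le : y <= x by rewrite cube_le ?powR_ge0 // powRV3K // -pn.
have -> : (p * n%:R) `^ (2%:R / 3%:R) = x ^+ 2.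
  by rewrite [2%:R / _]mulrC powRrM powR_mulrn.
set c := n%:R / expR (1 / 1024 * y).
have c_gt0 : 0 < c by rewrite divr_gt0 ?expR_gt0.
apply: le_trans (gnp_n_outside_le p x c p_ge0 p_le1 _ pn n_ge2 c_gt0); last lra.
have -> : n%:R / c = expR (1 / 1024 * y).
  by rewrite /c invf_div mulrCA mulfV ?mulr1 // lt0r_neq0.
by rewrite lerB // two_tails_le.
Qed.
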